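(* Let $n \ge 2$ and let $x, y, z \in \mathbb{R}^n/\mathbb{R}\mathbb{1}$. Then \[ \frac{1}{n-1}\, d_{\Delta}(x,y) \;\le\; \frac{1}{n-1}\, d_{\Delta}(x,z) + d_{\Delta}(y,z). \]
   Context: $\mathbb{1}=(1,\dots,1)\in\mathbb{R}^n$. The tropical torus is $\mathbb{R}^n/\mathbb{R}\mathbb{1}=\{x+\mathbb{R}\mathbb{1} : x\in\mathbb{R}^n\}$. The asymmetric tropical distance on $\mathbb{R}^n$ is $d_{\Delta}(x,y)=\sum_{i=1}^n (y_i-x_i) + n\max_{i}(x_i-y_i)$. It satisfies $d_\Delta(x+\lambda\mathbb{1},y+\mu\mathbb{1})=d_\Delta(x,y)$ for all $\lambda,\mu\in\mathbb{R}$, and hence induces a function $d_\Delta$ on $\mathbb{R}^n/\mathbb{R}\mathbb{1}$. *)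

From mathcomp Require Import all_boot all_order all_algebra.
Set Implicit Arguments. Unset Strict Implicit. Unset Printing Implicit Defensive.
Import Order.TTheory GRing.Theory Num.Theory.
Local Open Scope ring_scope.

(* The max over 'I_n is taken as \big[Num.max/ (x 0 - y 0)] for n>0; we use a
   fold with the first-coordinate seed so no bottom element is needed. *)
Definition tmax (R : realDomainType) (n : nat) (x y : 'rV[R]_n.+1) : R :=
  \big[Num.max/(x 0 0 - y 0 0)]_(i < n.+1) (x 0 i - y 0 i).

Definition d_trop (R : realDomainType) (n : nat) (x y : 'rV[R]_n.+1) : R :=
  \sum_(i < n.+1) (y 0 i - x 0 i) + (n.+1)%:R * tmax x y.

From mathcomp Require Import all_boot all_order all_algebra.
From mathcomp Require Import ring lra.
Import Order.TTheory GRing.Theory Num.Theory.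
Local Open Scope ring_scope.

(* Write d(x,y) = sum_i (M(x,y) - (x_i - y_i)) with M(x,y) = max_i (x_i - y_i),
   a sum of n nonnegative gaps.  Let k attain M(x,y).  Since x_k - z_k <= M(x,z),
   d(x,y) + d(y,z) <= d(x,z) + n g_k, where g_k = M(y,z) - (y_k - z_k) is a single
   gap of d(y,z), hence g_k <= d(y,z).  So d(x,y) <= d(x,z) + (n-1) d(y,z). *)

Section TropicalDistance.

Variables (R : realDomainType) (m : nat).
Implicit Types (x y z : 'rV[R]_m.+1).

Lemma le_tmax x y i : x 0 i - y 0 i <= tmax x y.
Proof. by rewrite /tmax (bigD1 i) //= le_max lexx. Qed.

Lemma tmax_attained x y : exists k, tmax x y = x 0 k - y 0 k.
Proof.
rewrite /tmax; apply: (big_ind (fun v => exists k, v = x 0 k - y 0 k)).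
- by exists 0.
- move=> a b [k ->] [l ->].
  by case: leP => _; [exists l | exists k].
- by move=> i _; exists i.
Qed.

Lemma d_trop_gapsE x y :
  d_trop x y = \sum_(i < m.+1) (tmax x y - (x 0 i - y 0 i)).
Proof.
rewrite /d_trop [RHS]big_split /= sumr_const card_ord mulr_natl [RHS]addrC.
by congr (_ + _); apply: eq_bigr => i _; rewrite opprB.
Qed.

Lemma gap_le_d_trop x y k : tmax x y - (x 0 k - y 0 k) <= d_trop x y.
Proof.
rewrite d_trop_gapsE (bigD1 k) //= lerDl.
by apply: sumr_ge0 => i _; rewrite subr_ge0 le_tmax.
Qed.

Lemma d_trop_subr x y z :
  d_trop x z - d_trop y z
  = \sum_(i < m.+1) (y 0 i - x 0 i) + (m.+1)%:R * (tmax x z - tmax y z).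
Proof.
rewrite /d_trop mulrBr (_ : \sum_i (y 0 i - x 0 i) = \sum_i (z 0 i - x 0 i)
  - \sum_i (z 0 i - y 0 i)); first by ring.
by rewrite -sumrB; apply: eq_bigr => i _; ring.
Qed.

Lemma d_trop_le_gap x y z k : tmax x y = x 0 k - y 0 k ->
  d_trop x y + d_trop y z
  <= d_trop x z + (m.+1)%:R * (tmax y z - (y 0 k - z 0 k)).
Proof.
move=> Mk; rewrite {1}/d_trop Mk.
have := d_trop_subr x y z.
have : (m.+1)%:R * (x 0 k - z 0 k) <= (m.+1)%:R * tmax x z.
  by rewrite ler_pM2l ?ltr0Sn // le_tmax.
lra.
Qed.

Lemma d_trop_le x y z : d_trop x y <= d_trop x z + m%:R * d_trop y z.
Proof.
have [k Mk] := tmax_attained x y.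
have gap_le : (m.+1)%:R * (tmax y z - (y 0 k - z 0 k)) <= (m.+1)%:R * d_trop y z.
  by rewrite ler_wpM2l ?ler0n ?gap_le_d_trop.
move: gap_le (d_trop_le_gap _ _ z _ Mk); rewrite -natr1; lra.
Qed.

End TropicalDistance.

Theorem mainTheorem1 (R : realFieldType) (m : nat) (hm : (1 <= m)%N)
  (x y z : 'rV[R]_m.+1) :
  d_trop x y / m%:R <= d_trop x z / m%:R + d_trop y z.
Proof.
have m_gt0 : 0 < m%:R :> R by rewrite ltr0n.
rewrite ler_pdivrMr // mulrDl divfK ?gt_eqF // [_ * m%:R]mulrC.
exact: d_trop_le.
Qed.
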